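(* For $n \ge 8$, let $\mu'(n)$ be the minimum number of edges of a (not necessarily connected) non-prime graph of order $n$. Then $\mu'(n) \le n$.
   Context: Graphs are finite and simple. A prime labeling of a graph $G$ of order $n$ is a bijection $\alpha: V(G) \to \{1,2,\dots,n\}$ such that $\gcd(\alpha(u),\alpha(v)) = 1$ for every edge $uv \in E(G)$. $G$ is prime if it admits a prime labeling, and non-prime otherwise. *)

From mathcomp Require Import all_boot.
Set Implicit Arguments. Unset Strict Implicit. Unset Printing Implicit Defensive.

Definition simple_graph (n : nat) (e : rel 'I_n) : Prop :=
  symmetric e /\ irreflexive e.

Definition num_edges (n : nat) (e : rel 'I_n) : nat :=
  #|[set p : 'I_n * 'I_n | e p.1 p.2 && (p.1 < p.2)]|.

(* A prime labeling: a bijection alpha : V -> {1..n}; we encode it as a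
   bijection f : 'I_n -> 'I_n with alpha v = (f v).+1. *)
Definition prime_labeling (n : nat) (e : rel 'I_n) (f : 'I_n -> 'I_n) : Prop :=
  bijective f /\ forall u v, e u v -> coprime (f u).+1 (f v).+1.

Definition is_prime_graph (n : nat) (e : rel 'I_n) : Prop :=
  exists f : 'I_n -> 'I_n, prime_labeling e f.

From mathcomp Require Import all_boot zify.

(* In a prime labeling the vertices carrying even labels are pairwise
   non-adjacent, so every prime graph of order n has an independent set of size
   n/2.  Cutting the vertices into consecutive blocks of three and making every
   block a triangle gives a graph with at most n edges in which an independent
   set meets each block at most once, i.e. has at most ceil(n/3) elements; for
   n >= 8 this is less than n/2. *)

Definition independent {n} (e : rel 'I_n) (S : {set 'I_n}) : Prop :=
  {in S &, forall u v, ~~ e u v}.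

Lemma card_odd_ord n : #|[set k : 'I_n | odd k]| = n./2.
Proof.
rewrite cardsE -sum1_card big_mkcond /=.
elim: n => [|n IHn]; first by rewrite big_ord0.
rewrite big_ord_recr /= IHn.
rewrite uphalf_half unfold_in /=; case: (odd n) => /=; lia.
Qed.

Lemma even_not_coprime a b : ~~ odd a -> ~~ odd b -> ~~ coprime a b.
Proof.
move=> ea eb; apply: contra eb => cop_ab.
by rewrite -coprime2n (coprime_dvdl _ cop_ab) // dvdn2.
Qed.

Lemma prime_graph_independent_half {n} (e : rel 'I_n) :
  is_prime_graph e -> exists S, independent e S /\ #|S| = n./2.
Proof.
move=> [f [[g fK _] cop_f]].
exists (f @^-1: [set k : 'I_n | odd k]); split.
- move=> u v; rewrite !inE => odd_u odd_v; apply/negP => /cop_f.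
  by apply/negP/even_not_coprime; rewrite /= negbK.
- by rewrite card_preimset ?card_odd_ord //; exact: can_inj fK.
Qed.

Definition block_rel n d : rel 'I_n :=
  [rel i j : 'I_n | (i != j) && (i %/ d == j %/ d)].

Lemma block_rel_simple n d : simple_graph (block_rel n d).
Proof.
split=> [i j | i]; rewrite /block_rel /=; last by rewrite eqxx.
by rewrite eq_sym [X in _ && X]eq_sym.
Qed.

Lemma independent_block_rel_card {n d} {S : {set 'I_n}} :
  independent (block_rel n d) S -> #|S| <= (n.-1 %/ d).+1.
Proof.
move=> indS; rewrite -[X in _ <= X]card_ord.
have block_lt (v : 'I_n) : v %/ d < (n.-1 %/ d).+1.
  by rewrite ltnS leq_div2r // -ltnS prednK ?ltn_ord // (leq_ltn_trans _ (ltn_ord v)).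
apply: (@leq_card_in _ _ (fun v : 'I_n => Ordinal (block_lt v))) => u v Su Sv.
move=> /(congr1 val) /= same_block; apply: contraNeq (indS u v Su Sv) => neq_uv.
by rewrite /block_rel /= neq_uv same_block eqxx.
Qed.

Lemma block_rel_not_prime n d :
  (n.-1 %/ d).+1 < n./2 -> ~ is_prime_graph (block_rel n d).
Proof.
move=> few_blocks /prime_graph_independent_half [S [indS cardS]].
by have := independent_block_rel_card indS; rewrite cardS leqNgt few_blocks.
Qed.

(* Each edge {a < b} of a triangle {3k, 3k+1, 3k+2} is charged to b when
   b = a + 1 and to a = 3k otherwise; distinct edges get distinct vertices. *)
Lemma num_edges_triangles n : num_edges (block_rel n 3) <= n.
Proof.
pose charge (p : 'I_n * 'I_n) := if val p.2 == p.1.+1 then p.2 else p.1.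
rewrite /num_edges -[X in _ <= X]card_ord; apply: (@leq_card_in _ _ charge).
move=> [a b] [c d]; rewrite !inE /charge /=.
move=> /andP[/andP[_ /eqP ab_block] ab_lt] /andP[/andP[_ /eqP cd_block] cd_lt].
move=> same_charge; congr pair; apply/val_inj; move: same_charge;
  by do 2![case: eqP => /= ?]; move/(congr1 val) => /=; lia.
Qed.

Theorem theorem10p5 (n : nat) (hn : 8 <= n) :
  exists e : rel 'I_n,
    simple_graph e /\ ~ is_prime_graph e /\ num_edges e <= n.
Proof.
exists (block_rel n 3); split; first exact: block_rel_simple.
split; last exact: num_edges_triangles.
by apply: block_rel_not_prime; lia.
Qed.
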